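(* Let $G$ be a finite group and $p$ a prime dividing $|G|$. The finite poset $\mathcal{A}_p(G)/G$ is conically contractible.
   Context: $\mathcal{A}_p(G)$ is the poset of non-trivial elementary abelian $p$-subgroups of $G$ ordered by inclusion, with $G$ acting by conjugation $A^g=g^{-1}Ag$. $\mathcal{A}_p(G)/G$ is the orbit poset: $\overline{A}\le\overline{B}$ iff there are $A_1\in\overline{A}$, $B_1\in\overline{B}$ with $A_1\le B_1$. A finite poset $X$ is conically contractible if there exist an order-preserving map $f:X\to X$ and a point $x_0\in X$ such that $x\le f(x)\ge x_0$ for all $x\in X$ (or the dual inequalities), so that $\mathrm{id}_X$ is homotopic to a constant map. *)

From mathcomp Require Import all_boot all_fingroup all_solvable.
Set Implicit Arguments. Unset Strict Implicit. Unset Printing Implicit Defensive.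
Local Open Scope group_scope.

Definition Ap (gT : finGroupType) (p : nat) (G : {set gT}) : {set {group gT}} :=
  [set E in 'E_p(G) | E :!=: 1].

Definition conj_orbit (gT : finGroupType) (G : {set gT}) (A : {group gT})
  : {set {group gT}} := [set (A :^ g)%G | g in G].

Definition ApG (gT : finGroupType) (p : nat) (G : {set gT})
  : {set {set {group gT}}} := [set conj_orbit G A | A in Ap p G].

Definition orb_le (gT : finGroupType) (O1 O2 : {set {group gT}}) : bool :=
  [exists A in O1, exists B in O2, (A \subset B)].

Definition conically_contractible (T : finType) (X : {set T}) (le : rel T)
  : Prop :=
  exists (f : T -> T) (x0 : T),
    [/\ x0 \in X,
        {in X, forall x, f x \in X},
        {in X &, forall x y, le x y -> le (f x) (f y)} &
        ({in X, forall x, le x (f x) /\ le x0 (f x)} \/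
         {in X, forall x, le (f x) x /\ le (f x) x0})].

From mathcomp Require Import all_boot all_fingroup all_solvable.

Set Implicit Arguments. Unset Strict Implicit. Unset Printing Implicit Defensive.
Local Open Scope group_scope.

(* For A in A_p(G) let R_A be a Sylow p-subgroup of C_G(A) and put
   f(A) = Omega_1(Z(R_A)); A is central in R_A, so A <= f(A).  The key fact is
   that if R is a Sylow p-subgroup of a group H and Q >= R is a p-group with
   Z(Q) <= H, then Z(Q) normalises R, hence lies in R and even in Z(R).
   If A <= B then R_B <= C_G(A) lies in a C_G(A)-conjugate Q of R_A, and the key
   fact (with H = C_G(B)) gives f(A)^c <= f(B): f induces a monotone map on
   A_p(G)/G above the identity.  Taking for Q a Sylow p-subgroup S^g of G
   containing R_A gives Omega_1(Z(S))^g <= f(A), so the orbit of Omega_1(Z(S))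
   is a common lower bound of all f(O). *)

Lemma centerJ (gT : finGroupType) (A : {set gT}) x : 'Z(A :^ x) = 'Z(A) :^ x.
Proof. by rewrite /center conjIg centJ. Qed.

Lemma subcentJ (gT : finGroupType) (G : {group gT}) (A : {set gT}) x :
  x \in G -> 'C_G(A :^ x) = 'C_G(A) :^ x.
Proof. by move=> Gx; rewrite conjIg centJ conjGid. Qed.

Lemma norm_sub_Sylow (gT : finGroupType) p (H R X : {group gT}) :
  p.-Sylow(H) R -> p.-group X -> X \subset H -> X \subset 'N(R) -> X \subset R.
Proof. by rewrite -max_pgroup_Sylow; apply: norm_sub_max_pgroup. Qed.

Lemma Sylow_ntrivg (gT : finGroupType) p (G S : {group gT}) :
  prime p -> p %| #|G| -> p.-Sylow(G) S -> S :!=: 1.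
Proof.
move=> pr_p pG sylS.
by rewrite -cardG_gt1 (card_Hall sylS) p_part_gt1 mem_primes pr_p cardG_gt0.
Qed.

Lemma center_sub_Sylow_center (gT : finGroupType) p (H R Q : {group gT}) :
  p.-Sylow(H) R -> R \subset Q -> p.-group Q -> 'Z(Q) \subset H ->
  'Z(Q) \subset 'Z(R).
Proof.
move=> sylR sRQ pQ sZH.
have cRZ : 'Z(Q) \subset 'C(R) by rewrite (subset_trans (subsetIr _ _)) ?centS.
rewrite subsetI cRZ andbT (norm_sub_Sylow sylR) ?(pgroupS (center_sub Q)) //.
exact: subset_trans cRZ (cent_sub R).
Qed.

Section OrbitPoset.

Variables (gT : finGroupType) (p : nat) (G : {group gT}).
Implicit Types A B Q R RA RB RX RY S X Y : {group gT}.

Lemma ApP A : reflect [/\ A \subset G, p.-abelem A & A :!=: 1] (A \in Ap p G).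
Proof.
rewrite inE; apply: (iffP andP) => [[/pElemP[sAG abA] ntA] | [sAG abA ntA]] //.
by split=> //; apply/pElemP.
Qed.

Lemma Ohm1_center_Ap R :
  R \subset G -> p.-group R -> R :!=: 1 -> ('Ohm_1('Z(R)))%G \in Ap p G.
Proof.
move=> sRG pR ntR; apply/ApP; split.
- exact: subset_trans (Ohm_sub 1 _) (subset_trans (center_sub R) sRG).
- exact: Ohm1_abelem (pgroupS (center_sub R) pR) (center_abelian R).
- by rewrite /= Ohm1_eq1; apply: contraNneq ntR => /(trivg_center_pgroup pR) ->.
Qed.

Lemma Sylow_cent_sub A R : p.-Sylow('C_G(A)) R -> R \subset G.
Proof. by move/pHall_sub/subset_trans; apply; apply: subsetIl. Qed.

Lemma abelian_sub_center_Sylow_cent A R :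
    A \subset G -> p.-group A -> abelian A -> p.-Sylow('C_G(A)) R ->
  A \subset 'Z(R).
Proof.
move=> sAG pA cAA sylR.
have sRC := subset_trans (pHall_sub sylR) (subsetIr G _).
have sAR : A \subset R.
  apply: norm_sub_Sylow sylR pA _ _; first by rewrite subsetI sAG.
  by apply: subset_trans (cent_sub R); rewrite centsC.
by rewrite subsetI sAR centsC.
Qed.

Lemma Ap_sub_Ohm1_center_Sylow_cent A R :
  A \in Ap p G -> p.-Sylow('C_G(A)) R -> A \subset 'Ohm_1('Z(R)).
Proof.
case/ApP=> sAG abA _ sylR; rewrite -(Ohm1_id abA) OhmS //.
have [pA cAA _] := and3P abA.
exact: abelian_sub_center_Sylow_cent.
Qed.

Lemma Ap_sub_Sylow_cent A R :
  A \in Ap p G -> p.-Sylow('C_G(A)) R -> A \subset R.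
Proof.
move=> ApA /(Ap_sub_Ohm1_center_Sylow_cent ApA)/subset_trans; apply.
exact: subset_trans (Ohm_sub 1 _) (center_sub R).
Qed.

Lemma Ohm1_center_Sylow_cent_Ap A R :
  A \in Ap p G -> p.-Sylow('C_G(A)) R -> ('Ohm_1('Z(R)))%G \in Ap p G.
Proof.
move=> ApA sylR; have /ApP[_ _ ntA] := ApA.
apply: Ohm1_center_Ap (Sylow_cent_sub sylR) (pHall_pgroup sylR) _.
by apply: contraNneq ntA => R1; rewrite -subG1 -R1 (Ap_sub_Sylow_cent ApA).
Qed.

Lemma center_sub_center_Sylow_cent B R Q :
    p.-Sylow('C_G(B)) R -> B \subset R -> R \subset Q -> Q \subset G ->
    p.-group Q ->
  'Z(Q) \subset 'Z(R).
Proof.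
move=> sylR sBR sRQ sQG pQ; apply: (center_sub_Sylow_center sylR sRQ pQ).
have cQZ : 'Z(Q) \subset 'C(Q) := subsetIr _ _.
by rewrite subsetI (subset_trans (center_sub Q)) ?(subset_trans cQZ) ?centS
  ?(subset_trans sBR).
Qed.

Lemma center_Sylow_cent_monoJ A B RA RB :
    A \subset B -> B \subset RB ->
    p.-Sylow('C_G(A)) RA -> p.-Sylow('C_G(B)) RB ->
  exists2 c, c \in G & 'Z(RA) :^ c \subset 'Z(RB).
Proof.
move=> sAB sBRB sylA sylB.
have sRBCA : RB \subset 'C_G(A).
  exact: subset_trans (pHall_sub sylB) (setIS G (centS sAB)).
have [Q sylQ sRBQ] := Sylow_superset sRBCA (pHall_pgroup sylB).
have [c /setIP[Gc _] defQ] := Sylow_trans sylA sylQ.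
exists c => //; rewrite -centerJ -defQ.
apply: center_sub_center_Sylow_cent sylB sBRB sRBQ _ (pHall_pgroup sylQ).
exact: Sylow_cent_sub sylQ.
Qed.

Lemma center_Sylow_sub_center_Sylow_centJ S A R :
    p.-Sylow(G) S -> A \subset R -> p.-Sylow('C_G(A)) R ->
  exists2 g, g \in G & 'Z(S) :^ g \subset 'Z(R).
Proof.
move=> sylS sAR sylR.
have [g Gg sRSg] := Sylow_subJ sylS (Sylow_cent_sub sylR) (pHall_pgroup sylR).
exists g => //; rewrite -centerJ.
apply: center_sub_center_Sylow_cent sylR sAR sRSg _ _.
  by rewrite -(conjGid Gg) conjSg (pHall_sub sylS).
by rewrite pgroupJ (pHall_pgroup sylS).
Qed.

Lemma orb_le_conj_orbitP A B :
  reflect (exists2 g, g \in G & A :^ g \subset B)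
          (orb_le (conj_orbit G A) (conj_orbit G B)).
Proof.
apply: (iffP existsP) => [[_ /andP[/imsetP[a Ga ->]]] | [g Gg sAgB]].
  case/existsP=> _ /andP[/imsetP[b Gb ->] /= sAaBb].
  exists (a * b^-1); first by rewrite groupM ?groupV.
  by rewrite -(conjSg _ _ b) -conjsgM mulgKV.
exists (A :^ g)%G; rewrite (mem_orbit 'JG) //=.
apply/existsP; exists B; rewrite sAgB andbT.
exact: (orbit_refl 'JG).
Qed.

Lemma conj_orbitJ A g : g \in G -> conj_orbit G (A :^ g)%G = conj_orbit G A.
Proof. by move=> Gg; apply/(@orbit_eqP _ _ 'JG); apply: (mem_orbit 'JG). Qed.

Lemma orb_le_conj_orbit_sub A B :
  A \subset B -> orb_le (conj_orbit G A) (conj_orbit G B).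
Proof. by move=> sAB; apply/orb_le_conj_orbitP; exists 1; rewrite ?conjsg1. Qed.

Lemma orb_le_Ohm1_center_Sylow_cent X Y RX RY :
    Y \in Ap p G -> orb_le (conj_orbit G X) (conj_orbit G Y) ->
    p.-Sylow('C_G(X)) RX -> p.-Sylow('C_G(Y)) RY ->
  orb_le (conj_orbit G ('Ohm_1('Z(RX)))%G) (conj_orbit G ('Ohm_1('Z(RY)))%G).
Proof.
move=> ApY /orb_le_conj_orbitP[g Gg sXgY] sylX sylY.
have sylXg : p.-Sylow('C_G(X :^ g)) (RX :^ g) by rewrite subcentJ // pHallJ2.
have [c Gc sZ] :=
  center_Sylow_cent_monoJ sXgY (Ap_sub_Sylow_cent ApY sylY) sylXg sylY.
apply/orb_le_conj_orbitP; exists (g * c); first by rewrite groupM.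
by rewrite conjsgM -!OhmJ OhmS //= -centerJ.
Qed.

Lemma orb_le_Ohm1_center_Sylow S X R :
    p.-Sylow(G) S -> X \in Ap p G -> p.-Sylow('C_G(X)) R ->
  orb_le (conj_orbit G ('Ohm_1('Z(S)))%G) (conj_orbit G ('Ohm_1('Z(R)))%G).
Proof.
move=> sylS ApX sylR.
have [g Gg sZ] :=
  center_Sylow_sub_center_Sylow_centJ sylS (Ap_sub_Sylow_cent ApX sylR) sylR.
by apply/orb_le_conj_orbitP; exists g; rewrite // -OhmJ OhmS.
Qed.

Definition cent_Sylow A : {group gT} := sval (Sylow_exists p 'C_G(A)%G).

Lemma cent_SylowP A : p.-Sylow('C_G(A)) (cent_Sylow A).
Proof. by rewrite /cent_Sylow; case: Sylow_exists. Qed.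

(* The [else] branch is junk: orbits are nonempty. *)
Definition orbit_map (O : {set {group gT}}) : {set {group gT}} :=
  if [pick A in O] is Some A
  then conj_orbit G ('Ohm_1('Z(cent_Sylow A)))%G else O.

Lemma orbit_mapE X : exists2 R : {group gT}, p.-Sylow('C_G(X)) R &
  orbit_map (conj_orbit G X) = conj_orbit G ('Ohm_1('Z(R)))%G.
Proof.
rewrite /orbit_map; case: pickP => [_ /imsetP[g Gg ->] | /(_ X)]; last first.
  by rewrite (orbit_refl 'JG).
set C := cent_Sylow _; exists (C :^ g^-1)%G.
  by rewrite -(pHallJ2 _ _ _ g) conjsgKV -subcentJ // cent_SylowP.
have -> : ('Ohm_1('Z(C :^ g^-1)))%G = ('Ohm_1('Z(C)) :^ g^-1)%G.
  by apply: val_inj; rewrite /= centerJ OhmJ.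
by rewrite conj_orbitJ ?groupV.
Qed.

End OrbitPoset.

Theorem theorem4p3 (gT : finGroupType) (G : {group gT}) (p : nat) :
  prime p -> p %| #|G| ->
  conically_contractible (ApG p G) (@orb_le gT).
Proof.
move=> pr_p pG; have [S sylS] := Sylow_exists p G.
have ApZS : ('Ohm_1('Z(S)))%G \in Ap p G.
  exact: Ohm1_center_Ap (pHall_sub sylS) (pHall_pgroup sylS)
                        (Sylow_ntrivg pr_p pG sylS).
exists (orbit_map p G), (conj_orbit G ('Ohm_1('Z(S)))%G); split.
- exact: imset_f.
- move=> _ /imsetP[X ApX ->]; have [R sylR ->] := orbit_mapE p G X.
  exact/imset_f/(Ohm1_center_Sylow_cent_Ap ApX sylR).
- move=> _ _ /imsetP[X ApX ->] /imsetP[Y ApY ->] leXY.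
  have [RX sylX ->] := orbit_mapE p G X; have [RY sylY ->] := orbit_mapE p G Y.
  exact: orb_le_Ohm1_center_Sylow_cent ApY leXY sylX sylY.
- left=> _ /imsetP[X ApX ->]; have [R sylR ->] := orbit_mapE p G X; split.
  + exact/orb_le_conj_orbit_sub/(Ap_sub_Ohm1_center_Sylow_cent ApX sylR).
  + exact: orb_le_Ohm1_center_Sylow sylS ApX sylR.
Qed.
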